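(* Consider the system, planning problem and lower-layer problem defined in the context, and suppose Assumptions (A1) and (A3) hold. Let $k_p\ge0$, let $(x_p^\star(k_p|k_p),u_p^\star(k_p|k_p),i)$ come from an optimal solution of the planning problem $\mathcal{P}(x(k_pM))$, and let the reference be $x_{\text{ref}}(k_pM+j)=A^jx_p^\star(k_p|k_p)+\sum_{m=0}^{j-1}A^mBu_p^\star(k_p|k_p)$, $j=0,\dots,M$, and assume it satisfies $Cx_{\text{ref}}(k_pM+j)\notin\mathbb{O}\oplus(-C)\mathbb{Z}_i$ for $j=0,\dots,M$. Let $k\in\{k_pM,\dots,k_pM+M-1\}$. If the lower-layer problem $\mathcal{L}(x(k),\{x_{\text{ref}}\},i,k)$ is feasible and $u(k)=v^\star(k|k)$ is the applied input, then $x(k)\in\mathbb{X}_i\subseteq\mathbb{X}$, $u(k)\in\mathbb{U}_i\subseteq\mathbb{U}$, and $y(k)=Cx(k)\notin\mathbb{O}$, i.e. for every $\ell\in\{1,\dots,H\}$ there is $a$ with $E_{\ell,a}y(k)\ge f_{\ell,a}$.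
   Context: System: $x(k+1)=Ax(k)+Bu(k)+w(k)$, $y(k)=Cx(k)$, with $x(k)\in\mathbb{R}^n$, $u(k)\in\mathbb{R}^m$, $y(k)\in\mathbb{R}^p$, unknown disturbance $w(k)\in\mathbb{R}^n$, and closed convex constraint sets $\mathbb{X}\subseteq\mathbb{R}^n$, $\mathbb{U}\subseteq\mathbb{R}^m$. Obstacles: for $\ell=1,\dots,H$, $\mathbb{O}_\ell=\{y\in\mathbb{R}^p: E_\ell y<f_\ell\}$ (componentwise), $E_\ell\in\mathbb{R}^{q_\ell\times p}$, $f_\ell\in\mathbb{R}^{q_\ell}$, each the interior of a compact convex polytope; $\mathbb{O}=\bigcup_{\ell=1}^H\mathbb{O}_\ell$. Notation: $\mathbb{X}\oplus\mathbb{Y}=\{x+y:x\in\mathbb{X},y\in\mathbb{Y}\}$, $\mathbb{X}\ominus\mathbb{Y}=\{x: \{x\}\oplus\mathbb{Y}\subseteq\mathbb{X}\}$, $G\mathbb{S}=\{Gs:s\in\mathbb{S}\}$; $\operatorname{rem}(k,M)$ is the remainder of $k$ divided by $M$; $\|x\|_Q^2=x^\top Qx$. Modes: $N_w$ modes; for each $i$, $\mathbb{X}_i\subseteq\mathbb{X}$, $\mathbb{U}_i\subseteq\mathbb{U}$ closed convex polytopes, $\mathbb{W}_i$ compact convex polytope. (A1): if $x(k)\in\mathbb{X}_i$ and $u(k)\in\mathbb{U}_i$ then $w(k)\in\mathbb{W}_i$. $K\in\mathbb{R}^{m\times n}$ with $A+BK$ Schur stable; $\mathbb{Z}_i$ compact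 convex polytopes with $(A+BK)\mathbb{Z}_i\oplus\mathbb{W}_i\subseteq\mathbb{Z}_i$; $\mathbb{E}_i(0)=\{0\}$, $\mathbb{E}_i(j+1)=(A+BK)\mathbb{E}_i(j)\oplus\mathbb{W}_i$. $M>1$ integer, $A_p=A^M$, $B_p=\sum_{i=0}^{M-1}A^iB$. (A3) Inter-sample sets $\mathbb{I}_i\subseteq\mathbb{R}^n\times\mathbb{R}^m$: if $(x_p,u_p)\in\mathbb{I}_i$ then for $\ell=1,\dots,M-1$: $A^\ell x_p+\sum_{m=0}^{\ell-1}A^mBu_p\in\mathbb{X}_i\ominus\mathbb{Z}_i$ and $C(A^\ell x_p+\sum_{m=0}^{\ell-1}A^mBu_p)\notin\mathbb{O}\oplus(-C)\mathbb{Z}_i$. Terminal sets $\mathbb{X}^f_i\subseteq\mathbb{R}^n$ are given. Planning problem $\mathcal{P}(\xi)$ at planning index $k_p$, $\xi=x(k_pM)$, horizon $N$, weights $\alpha_x,\alpha_u\ge0$, goal $x_{\text{goal}}$: minimize over $x_p(k_p+j|k_p)$ ($j=0,\dots,N$), $u_p(k_p+j|k_p)$ ($j=0,\dots,N-1$), $i$ the cost $\|x_{\text{goal}}-x_p(k_p+N|k_p)\|_\infty+\sum_{j=0}^{N-1}(\alpha_x\|x_p(k_p+j|k_p)\|_\infty+\alpha_u\|u_p(k_p+j|k_p)\|_\infty)$ subject to $i\in\{1,\dots,N_w\}$, $\xi-x_p(k_p|k_p)\in\mathbb{Z}_i$, and for all $j\in\{0,\dots,N-1\}$: $x_p(k_p+j+1|k_p)=A_px_p(k_p+j|k_p)+B_pu_p(k_p+j|k_p)$,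 $x_p(k_p+j|k_p)\in\mathbb{X}_i\ominus\mathbb{Z}_i$, $u_p(k_p+j|k_p)\in\mathbb{U}_i\ominus K\mathbb{Z}_i$, $Cx_p(k_p+j|k_p)\notin\mathbb{O}\oplus(-C)\mathbb{Z}_i$, $(x_p(k_p+j|k_p),u_p(k_p+j|k_p))\in\mathbb{I}_i$; and $x_p(k_p+N|k_p)\in\mathbb{X}^f_i$. Lower-layer problem $\mathcal{L}(x(k),\{x_{\text{ref}}\},i,k)$: with $L_k=M-\operatorname{rem}(k,M)$, minimize over $z(k+j|k)$ ($j=0,\dots,L_k$), $v(k+j|k)$ ($j=0,\dots,L_k-1$) the cost $\sum_{j=k}^{k+L_k-1}(\|x_{\text{ref}}(j)-z(j|k)\|_Q^2+\|v(j|k)\|_R^2)+\|x_{\text{ref}}(k+L_k)-z(k+L_k|k)\|_P^2$ ($Q,P,R$ positive definite) subject to $z(k|k)=x(k)$, $z(k+j+1|k)=Az(k+j|k)+Bv(k+j|k)$, and for the relevant $j$: $z(k+j|k)\in\mathbb{X}_i\ominus\mathbb{E}_i(j)$, $v(k+j|k)\in\mathbb{U}_i\ominus K\mathbb{E}_i(j)$, $C(z(k+j|k)-x_{\text{ref}}(k+j))\in C(\mathbb{Z}_i\ominus\mathbb{E}_i(j))$, and $z(k+L_k|k)-x_{\text{ref}}(k+L_k)\in\mathbb{Z}_i\ominus\mathbb{E}_i(L_k)$. Its optimal input sequence is denoted $v^\star(\cdot|k)$. *)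

From HB Require Import structures.
From mathcomp Require Import all_boot all_order all_algebra.
From mathcomp Require Import reals complex.
Set Implicit Arguments. Unset Strict Implicit. Unset Printing Implicit Defensive.
Import Order.TTheory GRing.Theory Num.Theory.
Local Open Scope ring_scope.

Section Defs.
Variable R : realType.

Definition vset (n : nat) := 'cV[R]_n -> Prop.

Definition msum n (X Y : vset n) : vset n :=
  fun z => exists x y, X x /\ Y y /\ z = x + y.
Definition pdiff n (X Y : vset n) : vset n :=
  fun x => forall y, Y y -> X (x + y).
Definition limage m n (G : 'M[R]_(m, n)) (S : vset n) : vset m :=
  fun z => exists s, S s /\ z = G *m s.
Definition subset_v n (X Y : vset n) := forall x, X x -> Y x.
Definition singleton0 n : vset n := fun x => x = 0.

Definition inorm n (x : 'cV[R]_n) : R := \big[Num.max/0]_(i < n) `|x i 0|.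
Definition qnorm n (Q : 'M[R]_n) (x : 'cV[R]_n) : R := (x^T *m Q *m x) 0 0.
Definition posdef n (Q : 'M[R]_n) :=
  Q^T = Q /\ forall x : 'cV[R]_n, x != 0 -> 0 < qnorm Q x.

Definition closed_set n (S : vset n) :=
  forall x, (forall eps : R, 0 < eps -> exists y, S y /\ inorm (x - y) < eps) -> S x.
Definition convex_set n (S : vset n) :=
  forall x y (t : R), S x -> S y -> 0 <= t <= 1 -> S (t *: x + (1 - t) *: y).
Definition polyhedral n (S : vset n) :=
  exists q (G : 'M[R]_(q, n)) (h : 'cV[R]_q),
    forall x, S x <-> forall a, (G *m x) a 0 <= h a 0.
Definition bounded_set n (S : vset n) :=
  exists r : R, forall x, S x -> inorm x <= r.
Definition compact_polytope n (S : vset n) := polyhedral S /\ bounded_set S.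

Definition schur_stable n (F : 'M[R]_n) :=
  forall lam : R[i], root (char_poly (map_mx (@real_complex R) F)) lam -> `|lam| < 1.

Definition obst_l p q (E : 'M[R]_(q, p)) (f : 'cV[R]_q) : vset p :=
  fun y => forall a, (E *m y) a 0 < f a 0.
Definition obst p H (q : 'I_H -> nat) (E : forall l, 'M[R]_(q l, p))
  (f : forall l, 'cV[R]_(q l)) : vset p :=
  fun y => exists l : 'I_H, obst_l (E l) (f l) y.

Fixpoint errset n (AK : 'M[R]_n) (W : vset n) (j : nat) : vset n :=
  match j with
  | 0 => @singleton0 n
  | j'.+1 => msum (limage AK (errset AK W j')) W
  end.

Definition intersample n m (A : 'M[R]_n) (B : 'M[R]_(n, m)) (l : nat)
  (x : 'cV[R]_n) (u : 'cV[R]_m) : 'cV[R]_n :=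
  A ^+ l *m x + \sum_(k < l) (A ^+ k *m B) *m u.

(* decision variables indexed relatively: xp j = x_p(k_p+j|k_p), up j = u_p(k_p+j|k_p) *)
Definition plan_feasible n m p Nw (A : 'M[R]_n) (B : 'M[R]_(n, m)) (C : 'M[R]_(p, n))
  (K : 'M[R]_(m, n)) (Xm Zm : 'I_Nw -> vset n) (Um : 'I_Nw -> vset m)
  (Im : 'I_Nw -> 'cV[R]_n * 'cV[R]_m -> Prop) (Xf : 'I_Nw -> vset n)
  (O : vset p) (M N : nat) (xi : 'cV[R]_n)
  (xp : nat -> 'cV[R]_n) (up : nat -> 'cV[R]_m) (i : 'I_Nw) : Prop :=
  Zm i (xi - xp 0%N) /\
  (forall j, (j < N)%N ->
     xp j.+1 = A ^+ M *m xp j + (\sum_(k < M) A ^+ k *m B) *m up j /\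
     pdiff (Xm i) (Zm i) (xp j) /\
     pdiff (Um i) (limage K (Zm i)) (up j) /\
     ~ msum O (limage (- C) (Zm i)) (C *m xp j) /\
     Im i (xp j, up j)) /\
  Xf i (xp N).

Definition plan_cost n m (N : nat) (ax au : R) (xgoal : 'cV[R]_n)
  (xp : nat -> 'cV[R]_n) (up : nat -> 'cV[R]_m) : R :=
  inorm (xgoal - xp N) + \sum_(j < N) (ax * inorm (xp j) + au * inorm (up j)).

Definition plan_optimal n m p Nw (A : 'M[R]_n) (B : 'M[R]_(n, m)) (C : 'M[R]_(p, n))
  (K : 'M[R]_(m, n)) (Xm Zm : 'I_Nw -> vset n) (Um : 'I_Nw -> vset m)
  (Im : 'I_Nw -> 'cV[R]_n * 'cV[R]_m -> Prop) (Xf : 'I_Nw -> vset n)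
  (O : vset p) (M N : nat) (ax au : R) (xgoal : 'cV[R]_n) (xi : 'cV[R]_n)
  (xp : nat -> 'cV[R]_n) (up : nat -> 'cV[R]_m) (i : 'I_Nw) : Prop :=
  plan_feasible A B C K Xm Zm Um Im Xf O M N xi xp up i /\
  forall xp' up' i', plan_feasible A B C K Xm Zm Um Im Xf O M N xi xp' up' i' ->
    plan_cost N ax au xgoal xp up <= plan_cost N ax au xgoal xp' up'.

(* decision variables indexed relatively: z j = z(k+j|k), v j = v(k+j|k);
   x_ref is indexed by absolute time *)
Definition ll_feasible n m p Nw (A : 'M[R]_n) (B : 'M[R]_(n, m)) (C : 'M[R]_(p, n))
  (K : 'M[R]_(m, n)) (Xm Zm Wm : 'I_Nw -> vset n) (Um : 'I_Nw -> vset m)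
  (M : nat) (xk : 'cV[R]_n) (xref : nat -> 'cV[R]_n) (i : 'I_Nw) (k : nat)
  (z : nat -> 'cV[R]_n) (v : nat -> 'cV[R]_m) : Prop :=
  let L := (M - k %% M)%N in
  let E := errset (A + B *m K) (Wm i) in
  z 0%N = xk /\
  (forall j, (j < L)%N ->
     z j.+1 = A *m z j + B *m v j /\
     pdiff (Xm i) (E j) (z j) /\
     pdiff (Um i) (limage K (E j)) (v j) /\
     limage C (pdiff (Zm i) (E j)) (C *m (z j - xref (k + j)%N)))  /\
  pdiff (Zm i) (E L) (z L - xref (k + L)%N).

Definition ll_cost n m (Q P : 'M[R]_n) (Rw : 'M[R]_m) (M : nat)
  (xref : nat -> 'cV[R]_n) (k : nat) (z : nat -> 'cV[R]_n) (v : nat -> 'cV[R]_m) : R :=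
  let L := (M - k %% M)%N in
  \sum_(j < L) (qnorm Q (xref (k + j)%N - z j) + qnorm Rw (v j))
  + qnorm P (xref (k + L)%N - z L).

Definition ll_optimal n m p Nw (A : 'M[R]_n) (B : 'M[R]_(n, m)) (C : 'M[R]_(p, n))
  (K : 'M[R]_(m, n)) (Xm Zm Wm : 'I_Nw -> vset n) (Um : 'I_Nw -> vset m)
  (Q P : 'M[R]_n) (Rw : 'M[R]_m)
  (M : nat) (xk : 'cV[R]_n) (xref : nat -> 'cV[R]_n) (i : 'I_Nw) (k : nat)
  (z : nat -> 'cV[R]_n) (v : nat -> 'cV[R]_m) : Prop :=
  ll_feasible A B C K Xm Zm Wm Um M xk xref i k z v /\
  forall z' v', ll_feasible A B C K Xm Zm Wm Um M xk xref i k z' v' ->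
    ll_cost Q P Rw M xref k z v <= ll_cost Q P Rw M xref k z' v'.

End Defs.

From HB Require Import structures.
From mathcomp Require Import all_boot all_order all_algebra.
From mathcomp Require Import reals complex.
Set Implicit Arguments. Unset Strict Implicit. Unset Printing Implicit Defensive.
Import Order.TTheory GRing.Theory Num.Theory.
Local Open Scope ring_scope.

(* At the current instant the lower-layer constraints are imposed with the
   error set E_i(0) = {0}, so they constrain x(k) itself: x(k) ∈ X_i,
   v*(k|k) ∈ U_i and C x(k) ∈ C x_ref(k) + C Z_i.  If C x(k) lay in an obstacle,
   then C x_ref(k) would lie in O ⊕ (-C) Z_i, which the reference excludes. *)

Section SetAlgebra.
Variable R : realType.

Lemma pdiff_sub n (S T : vset R n) : T 0 -> subset_v (pdiff S T) S.
Proof. by move=> T0 x /(_ 0 T0); rewrite addr0. Qed.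

Lemma limage0 m n (G : 'M[R]_(m, n)) (S : vset R n) : S 0 -> limage G S 0.
Proof. by exists 0; rewrite mulmx0. Qed.

Lemma limage_sub m n (G : 'M[R]_(m, n)) (S T : vset R n) :
  subset_v S T -> subset_v (limage G S) (limage G T).
Proof. by move=> ST y [s [Ss ->]]; exists s; split; first exact: ST. Qed.

Lemma errset0 n (AK : 'M[R]_n) (W : vset R n) : errset AK W 0%N 0.
Proof. by []. Qed.

End SetAlgebra.

Section Obstacles.
Variables (R : realType) (n p H : nat) (q : 'I_H -> nat).
Variables (E : forall l : 'I_H, 'M[R]_(q l, p)) (f : forall l : 'I_H, 'cV[R]_(q l)).

Lemma obst_tube (O : vset R p) (C : 'M[R]_(p, n)) (Z : vset R n) (xk r : 'cV[R]_n) :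
  limage C Z (C *m (xk - r)) -> O (C *m xk) -> msum O (limage (- C) Z) (C *m r).
Proof.
move=> [s [Zs hCs]] Ox; exists (C *m xk), (- C *m s); split => //; split.
  by exists s.
by rewrite mulNmx -hCs mulmxBr opprB addrC subrK.
Qed.

Lemma not_obst_rows (y : 'cV[R]_p) :
  ~ obst E f y -> forall l, exists a : 'I_(q l), f l a 0 <= (E l *m y) a 0.
Proof.
move=> notO l; case: (boolP [forall a, (E l *m y) a 0 < f l a 0]).
  by move/forallP=> inO; case: notO; exists l.
by case/forallPn=> a; rewrite -leNgt; exists a.
Qed.

End Obstacles.

Section LowerLayer.
Variables (R : realType) (n m p Nw : nat).
Variables (A : 'M[R]_n) (B : 'M[R]_(n, m)) (C : 'M[R]_(p, n)) (K : 'M[R]_(m, n)).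
Variables (Xm Zm Wm : 'I_Nw -> vset R n) (Um : 'I_Nw -> vset R m).

Lemma ll_feasible_first M xk xref i k z v : (0 < M)%N ->
  ll_feasible A B C K Xm Zm Wm Um M xk xref i k z v ->
  [/\ Xm i xk, Um i (v 0%N) & limage C (Zm i) (C *m (xk - xref k))].
Proof.
move=> M_gt0 [z0 [steps _]].
have first_step : (0 < M - k %% M)%N by rewrite subn_gt0 ltn_mod.
have [_ [Xz0 [Uv0 Cz0]]] := steps 0%N first_step.
have E0_0 := errset0 (A + B *m K) (Wm i).
rewrite -z0 -[k]addn0; split.
- exact: pdiff_sub E0_0 _ Xz0.
- exact: pdiff_sub (limage0 K E0_0) _ Uv0.
- exact: limage_sub (pdiff_sub E0_0) _ Cz0.
Qed.

End LowerLayer.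

Theorem proposition2
  (R : realType) (n m p : nat)
  (A : 'M[R]_n) (B : 'M[R]_(n, m)) (C : 'M[R]_(p, n))
  (* state and input constraint sets *)
  (X : vset R n) (U : vset R m)
  (hXc : closed_set X) (hXv : convex_set X) (hUc : closed_set U) (hUv : convex_set U)
  (* obstacles O_l = {y | E_l y < f_l}, l = 1..H, interiors of compact convex polytopes *)
  (H : nat) (q : 'I_H -> nat) (E : forall l : 'I_H, 'M[R]_(q l, p))
  (f : forall l : 'I_H, 'cV[R]_(q l))
  (hObs : forall l : 'I_H,
      bounded_set (fun y : 'cV[R]_p => forall a, (E l *m y) a 0 <= f l a 0))
  (* closed-loop trajectory with unknown disturbance *)
  (x : nat -> 'cV[R]_n) (u : nat -> 'cV[R]_m) (w : nat -> 'cV[R]_n)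
  (hsys : forall k, x k.+1 = A *m x k + B *m u k + w k)
  (* modes *)
  (Nw : nat) (Xm : 'I_Nw -> vset R n) (Um : 'I_Nw -> vset R m)
  (Wm Zm : 'I_Nw -> vset R n)
  (hXm : forall i, subset_v (Xm i) X /\ polyhedral (Xm i))
  (hUm : forall i, subset_v (Um i) U /\ polyhedral (Um i))
  (hWm : forall i, compact_polytope (Wm i))
  (hZm : forall i, compact_polytope (Zm i))
  (* Assumption (A1) *)
  (hA1 : forall k i, Xm i (x k) -> Um i (u k) -> Wm i (w k))
  (K : 'M[R]_(m, n)) (hK : schur_stable (A + B *m K))
  (hZinv : forall i, subset_v (msum (limage (A + B *m K) (Zm i)) (Wm i)) (Zm i))
  (M : nat) (hM : (1 < M)%N)
  (* inter-sample sets, Assumption (A3) *)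
  (Im : 'I_Nw -> 'cV[R]_n * 'cV[R]_m -> Prop)
  (hA3 : forall i xp0 up0, Im i (xp0, up0) ->
      forall l : nat, (0 < l)%N -> (l <= M - 1)%N ->
        pdiff (Xm i) (Zm i) (intersample A B l xp0 up0) /\
        ~ msum (obst E f) (limage (- C) (Zm i)) (C *m intersample A B l xp0 up0))
  (* terminal sets, planning horizon, weights, goal *)
  (Xf : 'I_Nw -> vset R n) (N : nat) (ax au : R) (hax : 0 <= ax) (hau : 0 <= au)
  (xgoal : 'cV[R]_n)
  (* optimal solution of P(x(k_p M)) *)
  (kp : nat) (xp : nat -> 'cV[R]_n) (up : nat -> 'cV[R]_m) (i : 'I_Nw)
  (hopt : plan_optimal A B C K Xm Zm Um Im Xf (obst E f) M N ax au xgoal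
            (x (kp * M)%N) xp up i)
  (* reference over the planning period *)
  (xref : nat -> 'cV[R]_n)
  (hxref : forall j, (j <= M)%N -> xref (kp * M + j)%N = intersample A B j (xp 0%N) (up 0%N))
  (hxrefO : forall j, (j <= M)%N ->
      ~ msum (obst E f) (limage (- C) (Zm i)) (C *m xref (kp * M + j)%N))
  (* current time and lower-layer problem *)
  (k : nat) (hk1 : (kp * M <= k)%N) (hk2 : (k < kp * M + M)%N)
  (Q P : 'M[R]_n) (Rw : 'M[R]_m) (hQ : posdef Q) (hP : posdef P) (hR : posdef Rw)
  (z : nat -> 'cV[R]_n) (v : nat -> 'cV[R]_m)
  (hll : ll_optimal A B C K Xm Zm Wm Um Q P Rw M (x k) xref i k z v)
  (hu : u k = v 0%N) :
  Xm i (x k) /\ X (x k) /\ Um i (u k) /\ U (u k) /\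
  ~ obst E f (C *m x k) /\
  (forall l : 'I_H, exists a : 'I_(q l), f l a 0 <= (E l *m (C *m x k)) a 0).
Proof.
have [Xx Uv tube] := ll_feasible_first (ltnW hM) hll.1.
rewrite -hu in Uv.
have notO : ~ obst E f (C *m x k).
  have := hxrefO (k - kp * M)%N; rewrite subnKC // leq_subLR => /(_ (ltnW hk2)).
  by move=> notRef /(obst_tube tube).
split=> //; split; first exact: (hXm i).1.
split=> //; split; first exact: (hUm i).1.
by split=> //; apply: not_obst_rows.
Qed.
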